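(* Let $G$ be a connected graph with vertex set $V(G)=\{u_1,\dots,u_n\}$, $n\ge 2$, let $U_1,\dots,U_k$ be the non-singleton true twin equivalence classes of $G$, and let $\mathcal{H}=\{H_1,\dots,H_n\}$ be a family of graphs. Then $$\dim_l(G\circ\mathcal{H})=\sum_{i=1}^{n}\operatorname{adim}_l(H_i)+\sum_{j:\,I\cap U_j\ne\emptyset}\big(|I\cap U_j|-1\big)+\varrho(G,\mathcal{H}).$$
   Context: All graphs are finite and simple with at least one vertex. $d_G$ is the shortest-path distance ($d_G(x,y)=+\infty$ if $x,y$ lie in different components), and $d_{G,2}(x,y)=\min\{d_G(x,y),2\}$. A vertex $s$ distinguishes $x,y$ (with respect to a distance $d$) if $d(s,x)\ne d(s,y)$. For a connected graph $G$, a set $S\subseteq V(G)$ is a local metric generator if every two adjacent vertices of $G$ are distinguished w.r.t. $d_G$ by some vertex of $S$; $\dim_l(G)$ is the minimum size of such a set. A set $S\subseteq V(H)$ is a local adjacency generator of a graph $H$ if every two adjacent vertices of $H$ are distinguished w.r.t. $d_{H,2}$ by some vertex of $S$ (equivalently, for any adjacent $x,y\notin S$ some $s\in S$ is adjacent to exactly one of them); $\operatorname{adim}_l(H)$ is the minimum size of such a set, and a minimum one is a local adjacency basis. $\Phi$ denotes the class of empty (edgeless) graphs. $\mathcal{G}$ denotes the class of graphs $H$ such that for every local adjacency basis $B$ of $H$ there is $v\in V(H)$ with $B\subseteq N_H(v)$ (open neighbourhood). Vertices $x,y$ are true twins if $N[x]=N[y]$; this is an equivalence relation. The lexicographic product $G\circ\mathcal{H}$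 has vertex set $\bigcup_i \{u_i\}\times V(H_i)$, with $(u_i,v)\sim(u_j,w)$ iff $u_iu_j\in E(G)$, or $i=j$ and $vw\in E(H_i)$. Notation: $T(G)=\bigcup_{j}U_j$; $V_E=\{u_i\in V(G)-T(G): H_i\in\Phi\}$; $I=\{u_i\in V(G): H_i\in\mathcal{G}\}$; for each $j$ with $I\cap U_j\neq\emptyset$ choose (arbitrarily) one vertex of $I\cap U_j$ and let $I'_j$ be the set of the remaining vertices of $I\cap U_j$ ($I'_j=\emptyset$ otherwise); $X_E=I-\bigcup_j I'_j$. Two vertices $u_i,u_j\in X_E$ satisfy relation $\mathcal{R}$ iff $u_i\sim u_j$ and $d_G(u,u_i)=d_G(u,u_j)$ for all $u\in V(G)-(V_E\cup\{u_i,u_j\})$. $\varrho(G,\mathcal{H})$ is the minimum of $|A|$ over sets $A\subseteq X_E$ such that every pair $u_i,u_j\in X_E$ satisfying $\mathcal{R}$ is distinguished (w.r.t. $d_G$) by some vertex of $A$. *)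

(* finite simple graphs as symmetric irreflexive relations
   on a finType. *)
From mathcomp Require Import all_boot.

Set Implicit Arguments.
Unset Strict Implicit.
Unset Printing Implicit Defensive.

Section GraphDefs.
Variables (T : finType) (e : rel T).

Fixpoint walk (k : nat) (x y : T) : bool :=
  if k is k'.+1 then [exists z, e x z && walk k' z y] else x == y.

(* shortest-path distance; None encodes +infinity (different components).
   A shortest walk is a path, of length < #|T|. *)
Definition dist (x y : T) : option nat :=
  let k := find (fun k => walk k x y) (iota 0 #|T|) in
  if k < #|T| then Some k else None.

Definition dist2 (x y : T) : nat :=
  if dist x y is Some k then minn k 2 else 2.

Definition connected : Prop := forall x y : T, dist x y != None.

(* minimum cardinality of a set satisfying P (the full set always
   satisfies the properties used below, so the default #|T| is harmless) *)
Definition min_card (P : pred {set T}) : nat :=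
  \big[minn/#|T|]_(S : {set T} | P S) #|S|.

Definition local_metric_gen (S : {set T}) : bool :=
  [forall x, forall y, e x y ==> [exists s in S, dist s x != dist s y]].

Definition ldim : nat := min_card local_metric_gen.

Definition local_adj_gen (S : {set T}) : bool :=
  [forall x, forall y, e x y ==> [exists s in S, dist2 s x != dist2 s y]].

Definition ladim : nat := min_card local_adj_gen.

Definition local_adj_basis (B : {set T}) : bool :=
  local_adj_gen B && (#|B| == ladim).

Definition nbhd (v : T) : {set T} := [set w | e v w].

Definition in_classG : bool :=
  [forall B : {set T}, local_adj_basis B ==> [exists v, B \subset nbhd v]].

Definition edgeless : bool := [forall x, forall y, ~~ e x y].

Definition true_twin (x y : T) : bool :=
  [forall z, ((z == x) || e x z) == ((z == y) || e y z)].

Definition twin_class (x : T) : {set T} := [set y | true_twin x y].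

Definition nstwin_classes : {set {set T}} :=
  [set twin_class x | x in [pred x | 1 < #|twin_class x|]].

Definition TG : {set T} := \bigcup_(U in nstwin_classes) U.

End GraphDefs.

Section LexProd.
Variables (VG : finType) (eG : rel VG) (H : VG -> finType)
          (eH : forall i, rel (H i)).

Definition lexprod : rel {i : VG & H i} :=
  fun x y => eG (tag x) (tag y) ||
             ((tag x == tag y) && @eH (tag x) (tagged x) (tagged_as x y)).

Definition VE : {set VG} :=
  [set u | (u \notin TG eG) && edgeless (@eH u)].

Definition Iset : {set VG} := [set u | in_classG (@eH u)].

(* X_E = I - \bigcup_j I'_j, where rep U is the chosen vertex of I \cap U *)
Definition XE_of (rep : {set VG} -> VG) : {set VG} :=
  Iset :\: \bigcup_(U in nstwin_classes eG | Iset :&: U != set0)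
              ((Iset :&: U) :\ rep U).

Definition relR (XE : {set VG}) (u v : VG) : bool :=
  [&& u \in XE, v \in XE, eG u v &
      [forall w, (w \notin VE :|: [set u; v]) ==>
                 (dist eG w u == dist eG w v)]].

Definition rho (XE : {set VG}) : nat :=
  min_card [pred A : {set VG} | (A \subset XE) &&
    [forall u, forall v, relR XE u v ==>
        [exists s in A, dist eG s u != dist eG s v]]].

End LexProd.

(* Distances in G o H between different fibres are those of G, and inside a
   fibre they are the truncated distances d_{H_i,2}.  Hence a local metric
   generator S of G o H restricts to local adjacency generators S_i of the H_i.
   Call S_i dominated if it lies in some N(a): then no vertex of the fibre of
   u_i resolves an edge from (u_i, a) to a neighbouring fibre, so such an edge
   must be resolved from a third vertex of G.  For H_i in the class
   \mathcal{G} an undominated S_i costs one vertex more than adim_l(H_i).  Of two true twins at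
   most one fibre is dominated, which accounts for the sizes |I'_j|; the
   vertices of X_E whose twin class still has a dominated fibre must be resolved
   in G, which accounts for rho.  Conversely, for a minimum such set A, bases on
   the fibres of X_E - A and undominated generators elsewhere give a local
   metric generator of the stated size. *)

From mathcomp Require Import all_boot.

Set Implicit Arguments.
Unset Strict Implicit.
Unset Printing Implicit Defensive.

Section Distance.
Variables (T : finType) (e : rel T).

Lemma walk1 x y : walk e 1 x y = e x y.
Proof.
apply/existsP/idP => [[z /andP[xz /eqP <-]] //|xy].
by exists y; rewrite xy eqxx.
Qed.

Lemma walkSr k x z : walk e k.+1 x z = [exists y, walk e k x y && e y z].
Proof.
elim: k x => [|k IH] x; first by rewrite walk1; apply/idP/existsP =>
  [xz|[y /andP[/eqP <-]]] //; exists x; rewrite /= eqxx.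
change (walk e k.+2 x z) with [exists y, e x y && walk e k.+1 y z].
apply/existsP/existsP => [[y /andP[xy]]|[y' /andP[/existsP[y /andP[xy yy'] ey'z]]]].
  rewrite IH => /existsP[y' /andP[yy' ey'z]].
  by exists y'; rewrite ey'z andbT; apply/existsP; exists y; rewrite xy.
by exists y; rewrite xy IH; apply/existsP; exists y'; rewrite ey'z andbT.
Qed.

Lemma walk_cat i j x y z : walk e i x y -> walk e j y z -> walk e (i + j) x z.
Proof.
elim: i x => [|i IH] x /=; first by move/eqP->.
by move=> /existsP[w /andP[xw wy]] yz; apply/existsP; exists w; rewrite xw (IH _ wy yz).
Qed.

Lemma dist_someP x y k : dist e x y = Some k ->
  [/\ walk e k x y, k < #|T| & forall j, j < k -> ~~ walk e j x y].
Proof.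
rewrite /dist; case: ifP => // lt [<-]; set k0 := find _ _ in lt *.
have hs : has (fun k => walk e k x y) (iota 0 #|T|) by rewrite has_find size_iota.
split=> //; first by have := nth_find 0 hs; rewrite nth_iota.
by move=> j ljk; have := before_find 0 ljk; rewrite nth_iota ?(ltn_trans ljk) // => ->.
Qed.

Lemma dist_le_walk x y k j : dist e x y = Some k -> walk e j x y -> k <= j.
Proof. by case/dist_someP=> _ _ min wj; rewrite leqNgt; apply: contraL wj => /min. Qed.

Lemma dist_walk x y k : walk e k x y -> k < #|T| ->
  (forall j, j < k -> ~~ walk e j x y) -> dist e x y = Some k.
Proof.
move=> wk lk min; rewrite /dist; set k0 := find _ _.
have le_k0k : k0 <= k.
  by rewrite leqNgt; apply/negP => /(before_find 0); rewrite nth_iota // add0n wk.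
have lk0 : k0 < #|T| by apply: leq_ltn_trans lk.
have wk0 : walk e k0 x y.
  have hs : has (fun k => walk e k x y) (iota 0 #|T|) by rewrite has_find size_iota.
  by have := nth_find 0 hs; rewrite nth_iota.
have -> : k0 = k by apply/eqP; rewrite eqn_leq le_k0k leqNgt; apply: contraL wk0 => /min.
by rewrite lk.
Qed.

Lemma dist_refl x : dist e x x = Some 0.
Proof. by apply: dist_walk => //=; apply/card_gt0P; exists x. Qed.

Lemma dist0_eq x y : dist e x y = Some 0 -> x = y.
Proof. by case/dist_someP => /eqP. Qed.

Lemma dist_eq_refl x y : x != y -> dist e x x != dist e x y.
Proof. by move=> nxy; rewrite dist_refl eq_sym; apply: contra nxy => /eqP/dist0_eq->. Qed.

Hypotheses (irr : irreflexive e) (sym : symmetric e).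

Lemma dist1E x y : (dist e x y == Some 1) = e x y.
Proof.
apply/eqP/idP => [/dist_someP[]|xy]; first by rewrite walk1.
have nxy : x != y by apply: contraTneq xy => ->; rewrite irr.
apply: dist_walk => [|| [|//]]; rewrite ?walk1 //=.
by have := max_card [set x; y]; rewrite cards2 nxy.
Qed.

Lemma dist_two x y z :
  x != y -> ~~ e x y -> e x z -> e z y -> dist e x y = Some 2.
Proof.
move=> nxy nexy exz ezy.
have nzx : z != x by apply: contraTneq exz => ->; rewrite irr.
have nzy : z != y by apply: contraTneq ezy => ->; rewrite irr.
apply: dist_walk => [|| [|[|//]]]; rewrite ?walk1 //=.
- by apply: (@walk_cat 1 1 _ z); rewrite walk1.
- have := max_card (z |: [set x; y]).
  by rewrite cardsU1 cards2 nxy !inE negb_or nzx nzy.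
Qed.

Lemma dist2E x y : dist2 e x y = if x == y then 0 else if e x y then 1 else 2.
Proof.
rewrite /dist2; have [->|nxy] := eqVneq x y; first by rewrite dist_refl.
case: ifP => [xy|nexy]; first by move/eqP: (dist1E x y); rewrite xy => ->.
case d: (dist e x y) => [[|[|k]]|] //; first by rewrite (dist0_eq d) eqxx in nxy.
by move/eqP: d; rewrite dist1E nexy.
Qed.

Lemma walk_sym k x y : walk e k x y = walk e k y x.
Proof.
elim: k x y => [|k IH] x y; first by rewrite /= eq_sym.
rewrite walkSr; apply/existsP/existsP => -[z /andP[h1 h2]]; exists z.
  by rewrite sym h2; change (walk e k z x); rewrite -IH.
by rewrite sym h1 andbT IH.
Qed.

Lemma dist_sym x y : dist e x y = dist e y x.
Proof.
by rewrite /dist (eq_find (a2 := fun k => walk e k y x)) // => k; rewrite walk_sym.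
Qed.

Lemma local_metric_gen_setT : local_metric_gen e setT.
Proof.
apply/forallP=> x; apply/forallP=> y; apply/implyP=> xy; apply/existsP; exists x.
by rewrite inE dist_eq_refl //; apply: contraTneq xy => ->; rewrite irr.
Qed.

End Distance.

Section Twins.
Variables (T : finType) (e : rel T).
Hypotheses (irr : irreflexive e) (sym : symmetric e).

Lemma twinP x y :
  reflect (forall z, (z == x) || e x z = (z == y) || e y z) (true_twin e x y).
Proof. by apply: (iffP forallP) => h z; apply/eqP. Qed.

Lemma twin_refl x : true_twin e x x.
Proof. exact/twinP. Qed.

Lemma twin_sym x y : true_twin e x y -> true_twin e y x.
Proof. by move/twinP=> h; apply/twinP=> z; rewrite h. Qed.

Lemma twin_trans x y z : true_twin e x y -> true_twin e y z -> true_twin e x z.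
Proof. by move=> /twinP h1 /twinP h2; apply/twinP=> w; rewrite h1 h2. Qed.

Lemma twin_adj x y : true_twin e x y -> x != y -> e x y.
Proof. by move=> /twinP/(_ y) + nxy; rewrite eqxx eq_sym (negbTE nxy). Qed.

Lemma twin_nbhd x y z : true_twin e x y -> z != x -> z != y -> e x z = e y z.
Proof. by move=> /twinP/(_ z) + zx zy; rewrite (negbTE zx) (negbTE zy). Qed.

Lemma twin_adjr x y z : true_twin e x y -> e z x -> z != y -> e z y.
Proof.
move=> tw ezx nzy; have nzx : z != x by apply: contraTneq ezx => ->; rewrite irr.
by rewrite sym -(twin_nbhd tw nzx nzy) sym.
Qed.

Lemma twin_edge u u' v v' : true_twin e u u' -> true_twin e v v' ->
  ~~ true_twin e u v -> e u v -> e u' v'.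
Proof.
move=> tu tv ntw euv.
have nvu' : v != u' by apply: contra ntw => /eqP ->.
have nu'v' : u' != v'.
  apply: contra ntw => /eqP eu'v'; rewrite eu'v' in tu.
  exact: twin_trans tu (twin_sym tv).
have evu' : e v u' by apply: twin_adjr tu _ nvu'; rewrite sym.
by apply: twin_adjr tv _ nu'v'; rewrite sym.
Qed.

Lemma twin_dist_le x y w k l : true_twin e x y -> w != x -> w != y ->
  dist e w x = Some k -> dist e w y = Some l -> l <= k.
Proof.
move=> tw wx wy dx dy; case/dist_someP: dx => + _ _.
case: k => [/eqP wxe|k]; first by rewrite wxe eqxx in wx.
rewrite walkSr => /existsP[p /andP[wp epx]].
have [epy|npy] := eqVneq p y.
  by rewrite epy in wp; apply: leq_trans (dist_le_walk dy wp) _.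
apply: (dist_le_walk dy); rewrite walkSr.
by apply/existsP; exists p; rewrite wp (twin_adjr tw).
Qed.

Lemma twin_distr x y w : connected e -> true_twin e x y -> w != x -> w != y ->
  dist e w x = dist e w y.
Proof.
move=> con tw wx wy.
case dx: (dist e w x) (con w x) => [k|] // _; case dy: (dist e w y) (con w y) => [l|] // _.
have := twin_dist_le (twin_sym tw) wy wx dy dx; have := twin_dist_le tw wx wy dx dy.
by move=> h1 h2; congr Some; apply/eqP; rewrite eqn_leq h1 h2.
Qed.

Lemma twin_distl x y w : connected e -> true_twin e x y -> w != x -> w != y ->
  dist e x w = dist e y w.
Proof. by move=> con tw wx wy; rewrite !(dist_sym sym _ w) (twin_distr con tw). Qed.

Lemma twin_separates u u' v v' w : connected e ->
  true_twin e u u' -> true_twin e v v' -> ~~ true_twin e u v -> e u v ->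
  w != u' -> w != v' -> dist e w u' != dist e w v' ->
  [/\ w != u, w != v & dist e w u != dist e w v].
Proof.
move=> con tu tv ntw euv wu' wv' d.
have d1 a b : e a b -> dist e a b = Some 1 by move=> eab; apply/eqP; rewrite dist1E.
have wu : w != u.
  apply: contraNneq d => ewu; subst w.
  by rewrite (d1 _ _ (twin_adj tu wu')) (d1 _ _ (twin_edge (twin_refl _) tv ntw euv)).
have wv : w != v.
  apply: contraNneq d => ewv; subst w; rewrite (d1 _ _ (twin_adj tv wv')).
  by rewrite (d1 v u') // sym (twin_edge tu (twin_refl _) ntw euv).
by rewrite (twin_distr con tu) ?(twin_distr con tv).
Qed.

Lemma twin_class_eq x y : true_twin e x y -> twin_class e x = twin_class e y.
Proof.
move=> tw; apply/setP=> z; rewrite !inE.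
by apply/idP/idP => h; [apply: twin_trans (twin_sym tw) h | apply: twin_trans tw h].
Qed.

Lemma nstwin_classP U : U \in nstwin_classes e -> forall x, x \in U -> U = twin_class e x.
Proof. by case/imsetP=> y _ -> x; rewrite inE => /twin_class_eq. Qed.

Lemma nstwin_classes_disjoint U V : U \in nstwin_classes e -> V \in nstwin_classes e ->
  U != V -> [disjoint U & V].
Proof.
move=> cU cV; apply: contraR => /pred0Pn[x /andP[/= xU xV]].
by rewrite (nstwin_classP cU xU) (nstwin_classP cV xV).
Qed.

Lemma twin_class_TG x : x \in TG e -> twin_class e x \in nstwin_classes e.
Proof. by case/bigcupP=> U cU xU; rewrite -(nstwin_classP cU xU). Qed.

Lemma twin_TG x y : true_twin e x y -> x != y -> x \in TG e.
Proof.
move=> tw nxy; apply/bigcupP; exists (twin_class e x); last by rewrite inE twin_refl.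
apply/imsetP; exists x => //; rewrite inE.
have sub : [set x; y] \subset twin_class e x.
  by apply/subsetP => z; rewrite !inE => /orP[] /eqP ->; rewrite ?twin_refl.
by have := subset_leq_card sub; rewrite cards2 nxy.
Qed.

Lemma TG_twin x : x \in TG e -> exists2 y, true_twin e x y & y != x.
Proof.
move/twin_class_TG/imsetP=> [z]; rewrite inE => lt1 ecl.
have /card_gt0P[y] : 0 < #|twin_class e x :\ x|.
  by move: lt1; rewrite -ecl (cardsD1 x) inE twin_refl.
by rewrite !inE => /andP[nyx tw]; exists y.
Qed.

End Twins.

Section MinCard.
Variables (T : finType) (P : pred {set T}).

Lemma min_card_le S : P S -> min_card P <= #|S|.
Proof.
rewrite /min_card; elim: (index_enum _) (mem_index_enum S) => // a r IH.
rewrite inE big_cons => /predU1P[<- ->|Sr PS]; first by rewrite geq_minl.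
by case: ifP => _; rewrite ?geq_min IH ?orbT.
Qed.

Lemma min_card_attained S0 : P S0 -> exists2 S, P S & #|S| = min_card P.
Proof.
move=> PS0; have le0 := min_card_le PS0.
suff [minT|//] : min_card P = #|T| \/ exists2 S, P S & #|S| = min_card P.
  by exists S0 => //; apply/eqP; rewrite eqn_leq le0 minT max_card.
rewrite /min_card; elim/big_ind: _ => [|m n hm hn|S PS]; [by left | | by right; exists S].
by case: leqP => _; [apply: hm | apply: hn].
Qed.

End MinCard.

Lemma card_sum_mem (T : finType) (A : {set T}) : #|A| = \sum_x (x \in A).
Proof. by rewrite -sum1_card big_mkcond; apply: eq_bigr => x _; case: (x \in A). Qed.

Lemma card_bigcup_disjoint (I T : finType) (P : pred I) (F : I -> {set T}) :
  (forall i j, P i -> P j -> i != j -> [disjoint F i & F j]) ->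
  #|\bigcup_(i | P i) F i| = \sum_(i | P i) #|F i|.
Proof.
move=> dis; rewrite card_sum_mem; under [RHS]eq_bigr do rewrite card_sum_mem.
rewrite exchange_big /=; apply: eq_bigr => x _.
have [/bigcupP[i Pi xi]|nx] := boolP (x \in \bigcup_(i | P i) F i).
  rewrite (bigD1 i) //= xi big1 // => j /andP[Pj nji].
  by rewrite (disjointFr (dis i j Pi Pj _) xi) // eq_sym.
rewrite big1 // => i Pi; apply/eqP; rewrite eqb0.
by apply: contra nx => xi; apply/bigcupP; exists i.
Qed.

Section AdjacencyGenerators.
Variables (T : finType) (e : rel T).
Hypotheses (irr : irreflexive e) (sym : symmetric e).

Definition dominated (X : {set T}) := [exists v, X \subset nbhd e v].

Lemma local_adj_genP (X : {set T}) x y : local_adj_gen e X -> e x y ->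
  exists2 s, s \in X & dist2 e s x != dist2 e s y.
Proof.
by move=> /forallP/(_ x)/forallP/(_ y)/implyP h /h /existsP[s /andP[sX d]]; exists s.
Qed.

Lemma local_adj_genS (X Y : {set T}) :
  X \subset Y -> local_adj_gen e X -> local_adj_gen e Y.
Proof.
move=> /subsetP sXY gX; apply/forallP=> x; apply/forallP=> y; apply/implyP=> xy.
by have [s sX d] := local_adj_genP gX xy; apply/existsP; exists s; rewrite sXY.
Qed.

Lemma local_adj_gen_setT : local_adj_gen e setT.
Proof.
apply/forallP=> x; apply/forallP=> y; apply/implyP=> xy; apply/existsP; exists x.
have nxy : x != y by apply: contraTneq xy => ->; rewrite irr.
by rewrite inE !dist2E // eqxx (negbTE nxy) xy.
Qed.

Lemma local_adj_basis_exists : exists B, local_adj_basis e B.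
Proof.
have [B gB cB] := min_card_attained local_adj_gen_setT.
by exists B; rewrite /local_adj_basis gB cB eqxx.
Qed.

Lemma local_adj_gen_neq0 (X : {set T}) x y : local_adj_gen e X -> e x y -> X != set0.
Proof. by move=> gX /(local_adj_genP gX)[s sX _]; apply/set0Pn; exists s. Qed.

Lemma undominatedP (X : {set T}) a : ~~ dominated X -> exists2 c, c \in X & ~~ e a c.
Proof.
move=> nd; have /subsetPn[c cX] : ~~ (X \subset nbhd e a).
  by apply: contra nd => sub; apply/existsP; exists a.
by rewrite inE => nac; exists c.
Qed.

Lemma dominatedP (X : {set T}) : dominated X -> exists a, {in X, forall c, e a c}.
Proof. by case/existsP=> a /subsetP sub; exists a => c /sub; rewrite inE. Qed.

Lemma edgeless_ladim : edgeless e -> ladim e = 0.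
Proof.
move=> el; apply/eqP; rewrite -leqn0 -(cards0 T) min_card_le //.
apply/forallP=> x; apply/forallP=> y; apply/implyP=> xy.
by move/forallP: el => /(_ x)/forallP/(_ y); rewrite xy.
Qed.

Hypothesis T_gt0 : 0 < #|T|.

Lemma undominated_neq0 (X : {set T}) : ~~ dominated X -> X != set0.
Proof.
apply: contra => /eqP ->; have /card_gt0P[x _] := T_gt0.
by apply/existsP; exists x; rewrite sub0set.
Qed.

Lemma edgeless_classG : edgeless e -> in_classG e.
Proof.
move=> el; apply/forallP=> B; apply/implyP=> /andP[_].
rewrite edgeless_ladim // cards_eq0 => /eqP ->.
by have /card_gt0P[x _] := T_gt0; apply/existsP; exists x; rewrite sub0set.
Qed.

Lemma edgeless_undominated (X : {set T}) : edgeless e -> X != set0 -> ~~ dominated X.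
Proof.
move=> el /set0Pn[x xX]; apply/negP => /dominatedP[a /(_ x xX)].
by move/forallP: el => /(_ a)/forallP/(_ x)/negbTE ->.
Qed.

Lemma ladim_lt_undominated (X : {set T}) : in_classG e -> local_adj_gen e X ->
  ~~ dominated X -> ladim e < #|X|.
Proof.
move=> clG gX nd; rewrite ltn_neqAle min_card_le // andbT.
apply: contra nd => /eqP cX; apply: (implyP (forallP clG X)).
by rewrite /local_adj_basis gX cX eqxx.
Qed.

(* A basis of a graph in the class \mathcal{G} lies in some N(v); adding v
   gives an undominated generator, since no generator lies in the common
   neighbourhood of an edge. *)
Lemma undominated_gen_exists : exists X,
  [&& local_adj_gen e X, ~~ dominated X & #|X| == ladim e + in_classG e].
Proof.
have [clG|] := boolP (in_classG e); last first.
  rewrite negb_forall => /existsP[B]; rewrite negb_imply => /andP[/andP[gB /eqP cB] nd].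
  by exists B; rewrite gB nd cB addn0 eqxx.
have [B bB] := local_adj_basis_exists; move/andP: (bB) => [gB /eqP cB].
have /existsP[v /subsetP Bv] := implyP (forallP clG B) bB.
have vB : v \notin B by apply/negP => /Bv; rewrite inE irr.
exists (v |: B); rewrite (local_adj_genS (subsetUr _ _) gB) cardsU1 vB cB addnC eqxx.
rewrite andbT; apply/negP => /dominatedP[a aX].
have eav : e a v by rewrite aX ?setU11.
have [s sB] := local_adj_genP gB eav.
have eas : e a s by rewrite aX ?setU1r.
have evs : e v s by have := Bv s sB; rewrite inE.
have nsa : s != a by apply: contraTneq eas => ->; rewrite irr.
have nsv : s != v by apply: contraTneq evs => ->; rewrite irr.
by rewrite !dist2E // (negbTE nsa) (negbTE nsv) sym eas sym evs.
Qed.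

End AdjacencyGenerators.

Section LexicographicProduct.
Variables (VG : finType) (eG : rel VG) (H : VG -> finType) (eH : forall u, rel (H u)).
Arguments eH : clear implicits.
Hypotheses (symG : symmetric eG) (irrG : irreflexive eG)
  (symH : forall i, symmetric (eH i)) (irrH : forall i, irreflexive (eH i))
  (H_gt0 : forall i, 0 < #|H i|) (VG_ge2 : 2 <= #|VG|) (conG : connected eG).

Local Notation P := {u : VG & H u}.
Local Notation eP := (lexprod eG eH).
Local Notation Tg := (@Tagged VG _ H).

Lemma lexprod_same u (a b : H u) : eP (Tg a) (Tg b) = eH u a b.
Proof. by rewrite /lexprod /= irrG eqxx /= (@tagged_asE _ _ (Tg a) b). Qed.

Lemma lexprod_diff u v (a : H u) (b : H v) : u != v -> eP (Tg a) (Tg b) = eG u v.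
Proof. by move=> nuv; rewrite /lexprod /= (negbTE nuv) orbF. Qed.

Lemma lexprod_irr : irreflexive eP.
Proof. by case=> u a; rewrite lexprod_same irrH. Qed.

Definition fibre_pt u : H u := enum_val (Ordinal (H_gt0 u)).

Lemma walk_tag j x y : walk eP j x y ->
  exists2 j', j' <= j & walk eG j' (tag x) (tag y).
Proof.
elim: j x => [|j IH] x /=; first by move/eqP->; exists 0; rewrite /= ?eqxx.
move=> /existsP[z /andP[+ /IH[j' le_j'j wj']]]; rewrite /lexprod.
case: (boolP (eG (tag x) (tag z))) => [exz _|_ /andP[/eqP exz _]].
  by exists j'.+1 => //; apply/existsP; exists (tag z); rewrite exz.
by exists j'; rewrite ?exz // leqW.
Qed.

Lemma walk_untag k u w (a : H u) (c : H w) :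
  walk eG k.+1 w u -> walk eP k.+1 (Tg c) (Tg a).
Proof.
have adj w' z (c' : H w') (d : H z) : eG w' z -> eP (Tg c') (Tg d).
  by move=> ew'z; rewrite lexprod_diff //; apply: contraTneq ew'z => ->; rewrite irrG.
elim: k w c => [|k IH] w c; first by rewrite !walk1; apply: adj.
move=> /existsP[z /andP[ewz wz]]; apply/existsP; exists (Tg (fibre_pt z)).
by apply/andP; split; [exact: adj | exact: (IH _ _ wz)].
Qed.

Lemma dist_lexprod_diff u w (a : H u) (c : H w) :
  w != u -> dist eP (Tg c) (Tg a) = dist eG w u.
Proof.
move=> nwu; case d: (dist eG w u) (conG w u) => [k|] // _.
case/dist_someP: (d) => + lt_k min.
case: k d lt_k min => [_ _ _ /eqP ewu|k d lt_k min wk]; first by rewrite ewu eqxx in nwu.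
apply: dist_walk; first exact: walk_untag.
  have inj : injective (fun u => Tg (fibre_pt u)) by move=> ? ? /(congr1 tag).
  by apply: leq_trans lt_k _; rewrite -(card_imset predT inj) max_card.
move=> j lt_jk; apply/negP => /walk_tag[j' le_j'j].
by apply/negP/min/(leq_ltn_trans le_j'j).
Qed.

Lemma exists_neighbour u : exists v, eG u v.
Proof.
have [v nvu] : exists v, v != u.
  apply/existsP; apply: contraTT VG_ge2; rewrite negb_exists => /forallP nv.
  rewrite -ltnNge ltnS -(cards1 u) subset_leq_card //.
  by apply/subsetP => v _; rewrite inE; apply/negPn/nv.
case d: (dist eG u v) (conG u v) => [[|k]|] // _; first by rewrite (dist0_eq d) eqxx in nvu.
by case/dist_someP: d => /existsP[z /andP[uz _]] _ _; exists z.
Qed.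

(* Two vertices of the same fibre are at distance at most 2, through any
   neighbouring fibre. *)
Lemma dist_lexprod_same u (c a : H u) : dist eP (Tg c) (Tg a) = Some (dist2 (eH u) c a).
Proof.
rewrite dist2E //; have [->|nca] := eqVneq c a; first exact: dist_refl.
case: ifP => eca; first by apply/eqP; rewrite dist1E ?lexprod_same //; apply: lexprod_irr.
have [v euv] := exists_neighbour u.
have nuv : u != v by apply: contraTneq euv => ->; rewrite irrG.
apply: (@dist_two _ _ lexprod_irr _ _ (Tg (fibre_pt v))).
- by rewrite eq_Tagged.
- by rewrite lexprod_same eca.
- by rewrite lexprod_diff.
- by rewrite lexprod_diff 1?eq_sym // symG.
Qed.

Lemma lexprod_separates_edge u v (a c : H u) (b : H v) : eG u v ->
  (dist eP (Tg c) (Tg a) != dist eP (Tg c) (Tg b)) = ~~ eH u a c.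
Proof.
move=> euv; have nuv : u != v by apply: contraTneq euv => ->; rewrite irrG.
have -> : dist eP (Tg c) (Tg b) = Some 1.
  by apply/eqP; rewrite dist1E ?lexprod_diff //; apply: lexprod_irr.
by rewrite dist1E ?lexprod_same 1?symH //; apply: lexprod_irr.
Qed.

Definition section (S : {set P}) u : {set H u} := [set c | Tg c \in S].

Lemma card_sections (S : {set P}) : #|S| = \sum_u #|section S u|.
Proof.
transitivity (\sum_u \sum_(c : H u | Tg c \in S) 1); last first.
  by apply: eq_bigr => u _; rewrite sum1dep_card.
rewrite (sig_big_dep predT (fun u (c : H u) => Tg c \in S) (fun _ _ => 1)) -sum1_card.
by apply: eq_bigl => -[u c].
Qed.

Lemma section_graph (f : forall u, {set H u}) u :
  section [set x : P | tagged x \in f (tag x)] u = f u.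
Proof. by apply/setP => c; rewrite !inE. Qed.

Lemma local_adj_gen_section S u :
  local_metric_gen eP S -> local_adj_gen (eH u) (section S u).
Proof.
move=> /forallP gS; apply/forallP=> a; apply/forallP=> b; apply/implyP=> eab.
have := implyP (forallP (gS (Tg a)) (Tg b)); rewrite lexprod_same => /(_ eab).
case/existsP=> -[w c] /andP[cS]; have [ewu|nwu] := eqVneq w u; last first.
  by rewrite !dist_lexprod_diff ?eqxx.
subst w; rewrite !dist_lexprod_same => d; apply/existsP; exists c.
by rewrite inE cS; apply: contra d => /eqP->.
Qed.

(* If section S u lies in N(a), every vertex of S in the fibre of u is adjacent
   to both ends of an edge from (u, a) to the fibre of v. *)
Lemma dominated_edge_separator S u v : local_metric_gen eP S -> eG u v ->
  dominated (eH u) (section S u) -> dominated (eH v) (section S v) ->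
  exists w, [/\ w != u, w != v, section S w != set0 & dist eG w u != dist eG w v].
Proof.
move=> /forallP gS euv /dominatedP[a aS] /dominatedP[b bS].
have nuv : u != v by apply: contraTneq euv => ->; rewrite irrG.
have := implyP (forallP (gS (Tg a)) (Tg b)); rewrite lexprod_diff // => /(_ euv).
case/existsP=> -[w c] /andP[cS d].
have [ewu|nwu] := eqVneq w u.
  by move: c cS d; rewrite ewu => c cS; rewrite lexprod_separates_edge // aS ?inE.
have [ewv|nwv] := eqVneq w v.
  move: c cS d; rewrite ewv => c cS.
  by rewrite eq_sym lexprod_separates_edge 1?symG // bS ?inE.
exists w; split=> //; first by apply/set0Pn; exists c; rewrite inE.
by rewrite !dist_lexprod_diff in d.
Qed.

Section Representatives.
Variable rep : {set VG} -> VG.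
Hypothesis repP : forall U, U \in nstwin_classes eG -> Iset eH :&: U != set0 ->
  rep U \in Iset eH :&: U.

Local Notation I := (Iset eH).
Local Notation TG := (TG eG).
Local Notation XE := (XE_of eG eH rep).

Definition Iprime : {set VG} :=
  \bigcup_(U in nstwin_classes eG | I :&: U != set0) ((I :&: U) :\ rep U).

Lemma card_Iprime :
  \sum_(U in nstwin_classes eG | I :&: U != set0) (#|I :&: U| - 1) = #|Iprime|.
Proof.
rewrite card_bigcup_disjoint => [|U V /andP[cU _] /andP[cV _] nUV].
  by apply: eq_bigr => U /andP[cU nI]; rewrite (cardsD1 (rep U)) repP // add1n subn1.
have sub W : (I :&: W) :\ rep W \subset W by apply/subsetP => x /setD1P[_ /setIP[]].
exact: disjointW (sub U) (sub V) (nstwin_classes_disjoint cU cV nUV).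
Qed.

Lemma rep_twin_class x : x \in I -> x \in TG ->
  rep (twin_class eG x) \in I :&: twin_class eG x.
Proof.
move=> xI xT; apply: repP; first exact: twin_class_TG.
by apply/set0Pn; exists x; rewrite !inE twin_refl andbT; rewrite inE in xI.
Qed.

Lemma mem_Iprime x :
  (x \in Iprime) = [&& x \in I, x \in TG & x != rep (twin_class eG x)].
Proof.
apply/bigcupP/idP => [[U /andP[cU _]]|/and3P[xI xT nxr]].
  rewrite !inE => /and3P[nxr xI xU]; rewrite -(nstwin_classP cU xU).
  by rewrite xI nxr andbT; apply/bigcupP; exists U.
exists (twin_class eG x); last by rewrite !inE nxr twin_refl andbT; rewrite inE in xI.
rewrite twin_class_TG //=; apply/set0Pn.
by exists (rep (twin_class eG x)); apply: rep_twin_class.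
Qed.

Lemma Iprime_TG x : x \in Iprime -> x \in TG.
Proof. by rewrite mem_Iprime => /and3P[]. Qed.

Lemma mem_XE x : (x \in XE) = (x \notin Iprime) && (x \in I).
Proof. by rewrite inE. Qed.

Definition xrep x := if x \in TG then rep (twin_class eG x) else x.

Lemma xrep_twin x : x \in I -> true_twin eG x (xrep x).
Proof.
rewrite /xrep; case: ifP => [xT xI|_ _]; last exact: twin_refl.
by have /setIP[_] := rep_twin_class xI xT; rewrite inE.
Qed.

Lemma xrep_XE x : x \in I -> xrep x \in XE.
Proof.
move=> xI; rewrite mem_XE /xrep; case: ifPn => [xT|nxT]; last first.
  by rewrite xI andbT; apply: contra nxT; apply: Iprime_TG.
have /setIP[rI rT] := rep_twin_class xI xT; rewrite rI andbT mem_Iprime rI negb_and.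
by rewrite inE in rT; rewrite -(twin_class_eq rT) eqxx andbF orbT.
Qed.

Lemma xrep_id x : x \in XE -> xrep x = x.
Proof.
rewrite mem_XE mem_Iprime => /andP[+ xI]; rewrite /xrep xI.
by case: ifP => //= _ /negPn/eqP.
Qed.

Lemma xrep_eq x y : true_twin eG x y -> xrep x = xrep y.
Proof.
move=> tw; have [->//|nxy] := eqVneq x y.
rewrite /xrep (twin_TG tw nxy) (twin_TG (twin_sym tw)) 1?eq_sym //.
by rewrite (twin_class_eq tw).
Qed.

Lemma XE_twin_eq u v : u \in XE -> v \in XE -> true_twin eG u v -> u = v.
Proof. by move=> uX vX /xrep_eq; rewrite !xrep_id. Qed.

Definition resolving (A : {set VG}) := (A \subset XE) &&
  [forall u, forall v, relR eG eH XE u v ==> [exists s in A, dist eG s u != dist eG s v]].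

Lemma resolving_XE : resolving XE.
Proof.
rewrite /resolving subxx; apply/forallP => u; apply/forallP => v.
apply/implyP => /and4P[uX _ euv _]; apply/existsP; exists u.
by rewrite uX dist_eq_refl //; apply: contraTneq euv => ->; rewrite irrG.
Qed.

Section LowerBound.
Variable S : {set P}.
Hypothesis gS : local_metric_gen eP S.

Definition undominated_fibres : {set VG} :=
  [set u | ~~ dominated (eH u) (section S u)].
Local Notation Q := undominated_fibres.

Lemma twin_undominated x y : true_twin eG x y -> x != y -> (x \in Q) || (y \in Q).
Proof.
move=> tw nxy; apply: contraT; rewrite negb_or !inE !negbK => /andP[dx dy].
have [w [wx wy _]] := dominated_edge_separator gS (twin_adj tw nxy) dx dy.
by rewrite (twin_distr irrG symG conG tw wx wy) eqxx.
Qed.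

(* The vertices of X_E that can serve as resolvers: those whose twin class
   meets I only inside Q. *)
Definition resolvers : {set VG} := XE :\: xrep @: (I :\: Q).

Lemma card_undominated_I : #|Q :&: I| = #|Iprime| + #|resolvers|.
Proof.
have inj : {in I :\: Q &, injective xrep}.
  move=> x y /setDP[xI xQ] /setDP[yI yQ] exy; apply: contraTeq isT => nxy.
  have tw : true_twin eG x y.
    by apply: twin_trans (xrep_twin xI) _; rewrite exy twin_sym ?xrep_twin.
  by have := twin_undominated tw nxy; rewrite (negbTE xQ) (negbTE yQ).
have subXE : xrep @: (I :\: Q) \subset XE.
  by apply/subsetP => _ /imsetP[x /setDP[xI _] ->]; apply: xrep_XE.
have subI : Iprime \subset I.
  by apply/subsetP => x; rewrite mem_Iprime => /and3P[].
have cI : #|I| = #|Iprime| + #|XE| by rewrite -(cardsID Iprime I) (setIidPr subI).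
have cQ : #|Q :&: I| + #|I :\: Q| = #|I| by rewrite setIC cardsID.
rewrite cardsD (setIidPr subXE) (card_in_imset inj) addnBA; last first.
  by rewrite -(card_in_imset inj) subset_leq_card.
by rewrite -cI -cQ addnK.
Qed.

Lemma not_resolverP x : x \in XE -> x \notin resolvers ->
  exists2 x', true_twin eG x x' & x' \in I :\: Q.
Proof.
move=> xX; rewrite inE xX andbT negbK => /imsetP[m mM ->]; exists m => //.
by case/setDP: mM => mI _; apply/twin_sym/xrep_twin.
Qed.

Lemma VE_resolver w : w \in VE eG eH -> section S w != set0 -> w \in resolvers.
Proof.
rewrite inE => /andP[wT el] nS; have wQ : w \in Q by rewrite inE edgeless_undominated.
rewrite inE mem_XE inE (edgeless_classG (H_gt0 w) el) (contra (@Iprime_TG w) wT) !andbT.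
apply/negP => /imsetP[m /setDP[mI mQ] ewm].
have tw : true_twin eG m w by rewrite ewm xrep_twin.
have [emw|nmw] := eqVneq m w; first by rewrite emw wQ in mQ.
by rewrite (twin_TG (twin_sym tw)) // eq_sym in wT.
Qed.

Lemma resolvers_resolving : resolving resolvers.
Proof.
rewrite /resolving subsetDl /=; apply/forallP => u; apply/forallP => v.
apply/implyP => /and4P[uX vX euv /forallP sameR].
have nuv : u != v by apply: contraTneq euv => ->; rewrite irrG.
have [uA|uA] := boolP (u \in resolvers).
  by apply/existsP; exists u; rewrite uA dist_eq_refl.
have [vA|vA] := boolP (v \in resolvers).
  by apply/existsP; exists v; rewrite vA eq_sym dist_eq_refl // eq_sym.
have [u' tu /setDP[_ u'Q]] := not_resolverP uX uA.
have [v' tv /setDP[_ v'Q]] := not_resolverP vX vA.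
have ntw : ~~ true_twin eG u v by apply: contra nuv => /(XE_twin_eq uX vX)->.
move: u'Q v'Q; rewrite !inE !negbK => du dv.
have [w [wu' wv' nS d']] :=
  dominated_edge_separator gS (twin_edge irrG symG tu tv ntw euv) du dv.
have [wu wv d] := twin_separates irrG symG conG tu tv ntw euv wu' wv' d'.
have wVE : w \in VE eG eH.
  apply: contraTT d => nVE; apply/negPn.
  by move: (sameR w); rewrite in_setU in_set2 (negbTE nVE) (negbTE wu) (negbTE wv).
by apply/existsP; exists w; rewrite VE_resolver.
Qed.

Lemma card_section_ge u : ladim (eH u) + (u \in Q :&: I) <= #|section S u|.
Proof.
have gSu := local_adj_gen_section u gS.
have [/setIP[uQ uI]|_] := boolP (u \in Q :&: I); last by rewrite addn0 min_card_le.
by rewrite inE in uQ; rewrite inE in uI; rewrite addn1; apply: ladim_lt_undominated.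
Qed.

Lemma ldim_lower_bound : \sum_u ladim (eH u) + #|Iprime| + rho eG eH XE <= #|S|.
Proof.
rewrite card_sections -addnA.
apply: (@leq_trans (\sum_u (ladim (eH u) + (u \in Q :&: I)))); last first.
  by apply: leq_sum => u _; apply: card_section_ge.
rewrite big_split /= -card_sum_mem card_undominated_I leq_add2l leq_add2l.
exact: min_card_le resolvers_resolving.
Qed.

End LowerBound.

Section UpperBound.
Variable A : {set VG}.
Hypothesis resA : resolving A.

Lemma resolving_sub : A \subset XE.
Proof. by case/andP: resA. Qed.

Definition basis u : {set H u} := xchoose (local_adj_basis_exists (@irrH u)).
Definition undominated_gen u : {set H u} :=
  xchoose (undominated_gen_exists (@irrH u) (@symH u)).

Definition fibre_gen u : {set H u} :=
  if u \in XE :\: A then basis u else undominated_gen u.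

Definition product_gen : {set P} := [set x | tagged x \in fibre_gen (tag x)].

Lemma fibre_genP u : [/\ local_adj_gen (eH u) (fibre_gen u),
  u \notin XE :\: A -> ~~ dominated (eH u) (fibre_gen u) &
  #|fibre_gen u| = ladim (eH u) + (u \in A :|: Iprime)].
Proof.
have /andP[gB /eqP cB] := xchooseP (local_adj_basis_exists (@irrH u)).
have /and3P[gU nU /eqP cU] := xchooseP (undominated_gen_exists (@irrH u) (@symH u)).
rewrite /fibre_gen /basis /undominated_gen; case: ifPn => [uXA|nXA].
  split=> //.
  rewrite cB in_setU; case/setDP: uXA; rewrite mem_XE => /andP[nIp _] nA.
  by rewrite (negbTE nIp) (negbTE nA) addn0.
split=> //; rewrite cU; congr (_ + _).
have -> : in_classG (eH u) = (u \in I) by rewrite inE.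
have AI : u \in A -> u \in I by move/(subsetP resolving_sub); rewrite mem_XE => /andP[].
have IpI : u \in Iprime -> u \in I by rewrite mem_Iprime => /and3P[].
move: nXA; rewrite in_setD mem_XE in_setU.
have [uA|uA] := boolP (u \in A); first by rewrite AI.
have [uIp|uIp] := boolP (u \in Iprime); first by rewrite IpI.
by rewrite /= => /negbTE ->.
Qed.

Lemma fibre_gen_neq0 u : (u \notin XE :\: A) || ~~ edgeless (eH u) -> fibre_gen u != set0.
Proof.
have [gF undF _] := fibre_genP u.
case/orP => [/undF/(undominated_neq0 (H_gt0 u)) //|].
by case/forallPn=> a /forallPn[b]; rewrite negbK => /(local_adj_gen_neq0 gF).
Qed.

(* An edge of G inside X_E - A is resolved by a vertex with non-empty fibre:
   either by a resolver from A, or by a vertex outside V_E, replaced by one of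
   its twins when its own fibre is empty. *)
Lemma separator_exists u v : u \in XE :\: A -> v \in XE :\: A -> eG u v ->
  exists w, [/\ w != u, w != v, fibre_gen w != set0 & dist eG w u != dist eG w v].
Proof.
move=> uXA vXA euv; have [/setDP[uX uA] /setDP[vX vA]] := conj uXA vXA.
have [hR|] := boolP (relR eG eH XE u v).
  case/andP: resA => _ /forallP/(_ u)/forallP/(_ v)/implyP/(_ hR)/existsP[s /andP[sA d]].
  have [su sv] : s != u /\ s != v.
    by split; [apply: contraNneq uA => <- | apply: contraNneq vA => <-].
  by exists s; rewrite su sv fibre_gen_neq0 // in_setD sA.
rewrite /relR uX vX euv /= => /forallPn[w]; rewrite negb_imply in_setU in_set2 !negb_or.
case/andP=> /and3P[wVE wu wv] d.
have [wXA|wXA] := boolP (w \in XE :\: A); last by exists w; rewrite fibre_gen_neq0 ?wXA.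
have [el|nel] := boolP (edgeless (eH w)); last first.
  by exists w; rewrite fibre_gen_neq0 ?nel ?orbT.
have [y tw nyw] : exists2 y, true_twin eG w y & y != w.
  by apply: TG_twin; move: wVE; rewrite inE el andbT negbK.
case/setDP: wXA => wX _.
have yX : y \notin XE by apply: contra nyw => yX; rewrite (XE_twin_eq wX yX tw).
have [yu yv] : y != u /\ y != v by split; apply: contraNneq yX => ->.
exists y; split=> //; last first.
  have dyw x : w != x -> y != x -> dist eG y x = dist eG w x.
    by move=> wx yx; rewrite (twin_distl irrG symG conG tw) // eq_sym.
  by rewrite !dyw.
by rewrite fibre_gen_neq0 // in_setD (negbTE yX) andbF.
Qed.

Lemma product_gen_metric : local_metric_gen eP product_gen.
Proof.
have mem w (c : H w) : (Tg c \in product_gen) = (c \in fibre_gen w) by rewrite inE.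
have undF w : w \notin XE :\: A -> ~~ dominated (eH w) (fibre_gen w).
  by case: (fibre_genP w).
apply/forallP => -[u a]; apply/forallP => -[v b]; apply/implyP.
have [euv|nuv] := eqVneq u v.
  subst v; rewrite lexprod_same => eab; have [gF _ _] := fibre_genP u.
  have [c cF d] := local_adj_genP gF eab; apply/existsP; exists (Tg c).
  by rewrite mem cF !dist_lexprod_same; apply: contra d => /eqP[->].
rewrite lexprod_diff // => euv.
have [uXA|/undF/(undominatedP a)[c cF nac]] := boolP (u \in XE :\: A); last first.
  by apply/existsP; exists (Tg c); rewrite mem cF lexprod_separates_edge.
have [vXA|/undF/(undominatedP b)[c cF nbc]] := boolP (v \in XE :\: A); last first.
  by apply/existsP; exists (Tg c); rewrite mem cF eq_sym lexprod_separates_edge // symG.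
have [w [wu wv /set0Pn[c cF] d]] := separator_exists uXA vXA euv.
by apply/existsP; exists (Tg c); rewrite mem cF !dist_lexprod_diff.
Qed.

Lemma card_product_gen : #|product_gen| = \sum_u ladim (eH u) + #|Iprime| + #|A|.
Proof.
have cF u : #|fibre_gen u| = ladim (eH u) + (u \in A :|: Iprime) by case: (fibre_genP u).
rewrite card_sections; under eq_bigr do rewrite section_graph cF.
rewrite big_split /= -card_sum_mem -addnA; congr (_ + _).
have AIp : A :&: Iprime = set0.
  apply/setP => x; rewrite !inE; apply/negP => /andP[/(subsetP resolving_sub)].
  by rewrite mem_XE => /andP[/negbTE->].
by rewrite cardsU AIp cards0 subn0 addnC.
Qed.

End UpperBound.

End Representatives.

End LexicographicProduct.

Theorem theorem2 (VG : finType) (eG : rel VG) (H : VG -> finType)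
    (eH : forall i, rel (H i)) (rep : {set VG} -> VG) :
  symmetric eG -> irreflexive eG ->
  (forall i, symmetric (eH i)) -> (forall i, irreflexive (eH i)) ->
  (forall i, 0 < #|H i|) ->
  2 <= #|VG| ->
  connected eG ->
  (forall U, U \in nstwin_classes eG -> Iset eH :&: U != set0 ->
     rep U \in Iset eH :&: U) ->
  ldim (lexprod eG eH) =
    \sum_(i : VG) ladim (eH i)
    + \sum_(U in nstwin_classes eG | Iset eH :&: U != set0)
         (#|Iset eH :&: U| - 1)
    + rho eG eH (XE_of eG eH rep).
Proof.
move=> symG irrG symH irrH H_gt0 VG_ge2 conG repP.
rewrite (card_Iprime repP); apply/eqP; rewrite eqn_leq; apply/andP; split.
  have [A resA cA] := min_card_attained (resolving_XE eH irrG rep).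
  rewrite -[rho _ _ _]cA -(card_product_gen symH irrH repP resA); apply: min_card_le.
  exact: (product_gen_metric symG irrG symH irrH H_gt0 VG_ge2 conG repP resA).
have [S gS cS] := min_card_attained (local_metric_gen_setT (lexprod_irr irrG irrH)).
rewrite -[ldim _]cS.
exact: (ldim_lower_bound symG irrG symH irrH H_gt0 VG_ge2 conG repP gS).
Qed.
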